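(* In the gradient-tracking setting (see context), let $K_z=K_y\in\mathbb{R}^{Nd\times Nd}$ be such that $F$ has all its eigenvalues except $d$ of them (counted with algebraic multiplicity) inside the open unit disc. Then for every $\theta_0\in\mathbb{R}^p$ and every initial condition $(x(0),z(0))\in\mathbb{R}^{Nd}\times\mathbb{R}^{Nd}$ with $\sum_{i=1}^N z_i(0)=0$, the trajectory of $\begin{bmatrix}x\\ z\end{bmatrix}^+=F\begin{bmatrix}x\\ z\end{bmatrix}+G\theta_0$ is bounded and $\lim_{t\to\infty}x_i(t)=\Sigma\theta_0$ for every $i=1,\dots,N$.
   Context: Let $N,d,p$ be positive integers. For $i=1,\dots,N$ let $C_i\in\mathbb{R}^{d\times d}$ be symmetric positive definite and $\Gamma_i\in\mathbb{R}^{d\times p}$; set $Q_i:=-C_i\Gamma_i$, $C:=\mathrm{diag}(C_1,\dots,C_N)$ (block diagonal), $Q:=\mathrm{col}(Q_1,\dots,Q_N)$, and $\Sigma:=\big(\sum_{i=1}^N C_i\big)^{-1}\sum_{i=1}^N C_i\Gamma_i$; $\Sigma\theta_0$ is the unique minimizer of $\sum_i \frac12(\theta-\Gamma_i\theta_0)^\top C_i(\theta-\Gamma_i\theta_0)$. Gradient-tracking setting: $A\in\mathbb{R}^{N\times N}$ is row stochastic ($A\mathbf{1}_N=\mathbf{1}_N$, nonnegative entries) and $\tilde A\in\mathbb{R}^{N\times N}$ is column stochastic ($\mathbf{1}_N^\top\tilde A=\mathbf{1}_N^\top$, nonnegative entries), each having $1$ as a simple eigenvalue with all other eigenvalues in the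 open unit disc; $\mathbf{A}:=A\otimes I_d$, $\tilde{\mathbf{A}}:=\tilde A\otimes I_d$. State $(x,z)$ with $x=(x_1,\dots,x_N)$, $z=(z_1,\dots,z_N)$, $x_i,z_i\in\mathbb{R}^d$. For gains $K_y,K_z\in\mathbb{R}^{Nd\times Nd}$, $F=\begin{bmatrix}\mathbf{A}+K_yC & K_z\\ (\tilde{\mathbf{A}}-I_{Nd})C & \tilde{\mathbf{A}}\end{bmatrix}$, $G=\begin{bmatrix}K_yQ\\ (\tilde{\mathbf{A}}-I_{Nd})Q\end{bmatrix}$, $\theta_0\in\mathbb{R}^p$. *)

From HB Require Import structures.
From mathcomp Require Import all_boot all_order all_algebra.
Set Implicit Arguments. Unset Strict Implicit. Unset Printing Implicit Defensive.
Import Order.TTheory GRing.Theory Num.Theory.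
Local Open Scope ring_scope.

(* Splitting an index k < N*d into a block index k %/ d < N and an offset k %% d < d.
   The stacked vector x = col(x_1,...,x_N) has (x_i)_a = x_(i*d + a). *)
Lemma blk_lt (N d : nat) (k : 'I_(N * d)) : (k %/ d < N)%N.
Proof.
case: d k => [|d] k; first by case: k => k; rewrite muln0.
by rewrite ltn_divLR.
Qed.

Lemma off_lt (N d : nat) (k : 'I_(N * d)) : (k %% d < d)%N.
Proof.
case: d k => [|d] k; first by case: k => k; rewrite muln0.
by rewrite ltn_pmod.
Qed.

Lemma idx_lt (N d : nat) (i : 'I_N) (a : 'I_d) : (i * d + a < N * d)%N.
Proof.
apply: (@leq_trans (i.+1 * d)); first by rewrite mulSn addnC ltn_add2r.
by rewrite leq_mul2r ltn_ord orbT.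
Qed.

Definition blk (N d : nat) (k : 'I_(N * d)) : 'I_N := Ordinal (blk_lt k).
Definition off (N d : nat) (k : 'I_(N * d)) : 'I_d := Ordinal (off_lt k).
Definition idx (N d : nat) (i : 'I_N) (a : 'I_d) : 'I_(N * d) := Ordinal (idx_lt i a).

Definition block_of (R : Type) (N d : nat) (x : 'cV[R]_(N * d)) (i : 'I_N) : 'cV[R]_d :=
  \col_(a < d) x (idx i a) ord0.

Definition kron (R : pzRingType) (m n p q : nat) (A : 'M[R]_(m, n)) (B : 'M[R]_(p, q))
  : 'M[R]_(m * p, n * q) :=
  \matrix_(k, l) (A (blk k) (blk l) * B (off k) (off l)).

Definition blkdiag (R : pzRingType) (N d : nat) (Cs : 'I_N -> 'M[R]_d) : 'M[R]_(N * d) :=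
  \matrix_(k, l) (if blk k == blk l then Cs (blk k) (off k) (off l) else 0).

Definition blkcol (R : pzRingType) (N d p : nat) (Qs : 'I_N -> 'M[R]_(d, p)) : 'M[R]_(N * d, p) :=
  \matrix_(k, j) Qs (blk k) (off k) j.

Definition eigenvalues_are (K : numClosedFieldType) (n : nat) (M : 'M[K]_n) (rs : seq K) :=
  char_poly M = \prod_(z <- rs) ('X - z%:P).

Definition real_mx (K : numClosedFieldType) (m n : nat) (M : 'M[K]_(m, n)) :=
  forall i j, M i j \is Num.real.

Definition sym_posdef (K : numClosedFieldType) (d : nat) (M : 'M[K]_d) :=
  [/\ real_mx M, M^T = M &
      forall v : 'cV[K]_d, real_mx v -> v != 0 -> 0 < (v^T *m M *m v) ord0 ord0].

Definition row_stochastic_good (K : numClosedFieldType) (N : nat) (A : 'M[K]_N) :=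
  [/\ forall i j, 0 <= A i j,
      A *m (const_mx 1 : 'cV[K]_N) = const_mx 1 &
      exists rs, [/\ eigenvalues_are A rs, count (pred1 1) rs = 1%N &
                     all (fun z => (z == 1) || (`|z| < 1)) rs]].

Definition col_stochastic_good (K : numClosedFieldType) (N : nat) (A : 'M[K]_N) :=
  [/\ forall i j, 0 <= A i j,
      (const_mx 1 : 'rV[K]_N) *m A = const_mx 1 &
      exists rs, [/\ eigenvalues_are A rs, count (pred1 1) rs = 1%N &
                     all (fun z => (z == 1) || (`|z| < 1)) rs]].

Section GT.
Variables (K : numClosedFieldType) (N d p : nat).
Variables (Cs : 'I_N -> 'M[K]_d) (Gs : 'I_N -> 'M[K]_(d, p)) (A At : 'M[K]_N)
          (Ky Kz : 'M[K]_(N * d)).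

Definition Cbig : 'M[K]_(N * d) := blkdiag Cs.
Definition Qbig : 'M[K]_(N * d, p) := blkcol (fun i => - (Cs i *m Gs i)).
Definition Abig : 'M[K]_(N * d) := kron A (1%:M : 'M[K]_d).
Definition Atbig : 'M[K]_(N * d) := kron At (1%:M : 'M[K]_d).

Definition Fmx : 'M[K]_(N * d + N * d) :=
  block_mx (Abig + Ky *m Cbig) Kz ((Atbig - 1%:M) *m Cbig) Atbig.
Definition Gmx : 'M[K]_(N * d + N * d, p) :=
  col_mx (Ky *m Qbig) ((Atbig - 1%:M) *m Qbig).
Definition Sigma : 'M[K]_(d, p) :=
  invmx (\sum_(i < N) Cs i) *m (\sum_(i < N) Cs i *m Gs i).
End GT.

(* Let W : R^(2Nd) -> R^d map a state (x, z) to the sum of the blocks z_i.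
   Column stochasticity of Ã gives W F = W, so W s(t) is conserved; it is 0
   initially.  With K_z = K_y the state x_i = Σθ0, z = -(C x + Q θ0) is an
   equilibrium (ΣC_i is invertible), and it also lies in ker W.  On ker W the
   error s(t) - equilibrium evolves under the deflated matrix F - F R W, where
   W R = I; its characteristic polynomial is that of F with d eigenvalues 1
   replaced by 0.  Since F has exactly d eigenvalues off the open unit disc,
   the deflated matrix is Schur stable, and Cayley-Hamilton, peeled one factor
   at a time, drives the error to 0. *)

From HB Require Import structures.
From mathcomp Require Import all_boot all_order all_algebra.
From mathcomp Require Import ring.
Set Implicit Arguments. Unset Strict Implicit. Unset Printing Implicit Defensive.
Import Order.TTheory GRing.Theory Num.Theory.
Local Open Scope ring_scope.

Section Convergence.
Variable K : archiClosedFieldType.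

Definition cvg0 (u : nat -> K) := forall eps : K, 0 < eps ->
  exists T, forall t, (T <= t)%N -> `|u t| < eps.

Definition mx_cvg0 m n (u : nat -> 'M[K]_(m, n)) := forall eps : K, 0 < eps ->
  exists T, forall t, (T <= t)%N -> forall i j, `|u t i j| < eps.

(* Above [eps] the sequence drops by [del] at each step, and below [eps] it
   stays there. *)
Lemma contraction_eventually_lt (rho del eps : K) (v : nat -> K) :
  0 <= rho -> rho <= 1 -> 0 < del -> 0 < eps -> rho * eps + del *+ 2 <= eps ->
  (forall t, 0 <= v t) -> (forall t, v t.+1 <= rho * v t + del) ->
  exists T, forall t, (T <= t)%N -> v t < eps.
Proof.
move=> rho0 rho1 del0 eps0 hdel v0 hv.
have stay t : v t < eps -> v t.+1 < eps.
  move=> hlt; apply: le_lt_trans (hv t) (lt_le_trans _ hdel).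
  apply: (@le_lt_trans _ _ (rho * eps + del)); first by rewrite lerD2r ler_wpM2l // ltW.
  by rewrite mulr2n addrA ltrDl.
have descend t : eps <= v t -> v t.+1 <= v t - del.
  move=> hle; apply: le_trans (hv t) _; rewrite lerBrDr -addrA -mulr2n -subr_ge0.
  have -> : v t - (rho * v t + del *+ 2)
      = (1 - rho) * (v t - eps) + (eps - (rho * eps + del *+ 2)) by ring.
  by rewrite addr_ge0 ?mulr_ge0 ?subr_ge0.
have drop j : v j < eps \/ v j <= v 0%N - j%:R * del.
  elim: j => [|j [lt|le]]; first by right; rewrite mul0r subr0.
    by left; apply: stay.
  have [ge|lt] := real_leP (gtr0_real eps0) (ger0_real (v0 j)); last by left; apply: stay.
  right; apply: le_trans (descend _ ge) _.
  by rewrite -natr1 mulrDl mul1r opprD addrA lerB.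
set n0 := Num.bound (v 0%N / del).
have n0_lt : v n0 < eps.
  have hn0 : v 0%N < n0%:R * del.
    by rewrite -ltr_pdivrMr // archi_boundP // divr_ge0 // ltW.
  case: (drop n0) => // le; apply: le_lt_trans le _.
  by rewrite (lt_trans _ eps0) // subr_lt0.
exists n0 => t; elim: t => [|t IH]; first by rewrite leqn0 => /eqP <-.
by rewrite leq_eqVlt ltnS => /predU1P [<- | /IH /stay].
Qed.

Lemma cvg0_linear_recursion (r : K) (u w : nat -> K) : `|r| < 1 ->
  (forall t, u t.+1 = r * u t + w t) -> cvg0 w -> cvg0 u.
Proof.
move=> hr hu hw eps eps0.
set del := (1 - `|r|) * eps / 2%:R.
have del0 : 0 < del by rewrite divr_gt0 ?mulr_gt0 ?subr_gt0 ?ltr0n.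
have hdel : `|r| * eps + del *+ 2 <= eps.
  by rewrite /del -mulr_natr divfK ?pnatr_eq0 // mulrBl mul1r addrC subrK.
have [T hT] := hw _ del0.
have step t : `|u (T + t.+1)%N| <= `|r| * `|u (T + t)%N| + del.
  by rewrite addnS hu (le_trans (ler_normD _ _)) // normrM lerD2l ltW ?hT ?leq_addr.
have [T' hT'] := @contraction_eventually_lt `|r| del eps (fun t => `|u (T + t)%N|)
  (normr_ge0 r) (ltW hr) del0 eps0 hdel (fun t => normr_ge0 _) step.
exists (T + T')%N => t ht; rewrite -(subnKC ht) -addnA; apply: hT'; exact: leq_addr.
Qed.

Lemma cvg0_mxpow_annihilated n (M : 'M[K]_n) (rs : seq K) (v : 'cV[K]_n) :
  all (fun r => `|r| < 1) rs -> (\prod_(r <- rs) (M - r%:M)) *m v = 0 ->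
  forall k, cvg0 (fun t => (M ^+ t *m v) k ord0).
Proof.
elim/last_ind: rs v => [|rs r IH] v.
  move=> _; rewrite big_nil mul1mx => -> k eps eps0; exists 0%N => t _.
  by rewrite mulmx0 mxE normr0.
rewrite all_rcons big_rcons /= => /andP[hr hall] hv k.
set w := (M - r%:M) *m v.
apply: (@cvg0_linear_recursion r _ (fun t => (M ^+ t *m w) k ord0) hr).
  move=> t; rewrite exprSr -mulmxE -mulmxA.
  have -> : M *m v = w + r *: v by rewrite /w mulmxBl mul_scalar_mx addrNK.
  by rewrite mulmxDr -scalemxAr !mxE addrC.
by apply: IH hall _ _; rewrite /w mulmxA -mulmxE.
Qed.

Lemma mx_cvg0P m n (u : nat -> 'M[K]_(m, n)) :
  (forall i j, cvg0 (fun t => u t i j)) -> mx_cvg0 u.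
Proof.
move=> hu eps eps0.
have [T hT] := fin_all_exists (fun ij : 'I_m * 'I_n => hu ij.1 ij.2 eps eps0).
exists (\max_ij T ij)%N => t ht i j; apply: (hT (i, j)).
exact: leq_trans (leq_bigmax (i, j)) ht.
Qed.

Lemma mx_cvg0_bounded m n (u : nat -> 'M[K]_(m, n)) (c : 'M[K]_(m, n)) :
  mx_cvg0 (fun t => u t - c) -> exists M, forall t i j, `|u t i j| <= M.
Proof.
move=> hu; have [T hT] := hu 1 ltr01.
pose B (ij : 'I_m * 'I_n) := 1 + `|c ij.1 ij.2| + \sum_(s < T) `|u s ij.1 ij.2|.
have B0 ij : 0 <= B ij by rewrite !addr_ge0 ?sumr_ge0.
exists (\sum_ij B ij) => t i j.
apply: (@le_trans _ _ (B (i, j))); last by rewrite (bigD1 (i, j)) //= lerDl sumr_ge0.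
rewrite /B /=; case: (leqP T t) => [hTt | htT].
  apply: ler_wpDr; first exact: sumr_ge0.
  rewrite -[u t i j](subrK (c i j)) (le_trans (ler_normD _ _)) // lerD2r ltW //.
  by have := hT t hTt i j; rewrite !mxE.
apply: ler_wpDl; first by rewrite addr_ge0.
by rewrite (bigD1 (Ordinal htT)) //= lerDl sumr_ge0.
Qed.

End Convergence.

Lemma Cayley_Hamilton_roots (R : comNzRingType) n (M : 'M[R]_n) (rs : seq R) :
  char_poly M = \prod_(r <- rs) ('X - r%:P) -> \prod_(r <- rs) (M - r%:M) = 0.
Proof.
case: n M => [|n] M h; first by apply/matrixP => -[].
have := Cayley_Hamilton M; rewrite h rmorph_prod /=.
by under eq_bigr do rewrite rmorphB /= horner_mx_X horner_mx_C.
Qed.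

(* Both sides are determinants of the two triangularisations of the block
   matrix [[X - F, - F S], [W, 1]]. *)
Lemma char_poly_deflate (R : comNzRingType) n d (F : 'M[R]_n) (W : 'M[R]_(d, n))
    (S : 'M[R]_(n, d)) :
  W *m F = W -> W *m S = 1%:M ->
  char_poly (F - F *m S *m W) * ('X - 1) ^+ d = char_poly F * 'X ^+ d.
Proof.
move=> WF WS.
set Ap := char_poly_mx F; set Up := map_mx polyC (F *m S); set Wp := map_mx polyC W.
have defl : char_poly_mx (F - F *m S *m W) = Ap + Up *m Wp.
  by rewrite /char_poly_mx /Ap /Up /Wp map_mxB map_mxM opprB addrA addrAC.
have WA : Wp *m Ap = ('X - 1) *: Wp.
  by rewrite /Ap /char_poly_mx mulmxBr mul_mx_scalar -map_mxM WF scalerBl scale1r.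
have WU : Wp *m Up = 1%:M by rewrite -map_mxM mulmxA WF WS map_mx1.
set M := block_mx Ap (- Up) Wp (1%:M : 'M_d).
have lower : M *m block_mx 1%:M 0 (- Wp) 1%:M = block_mx (Ap + Up *m Wp) (- Up) 0 1%:M.
  by rewrite mulmx_block !mulmx1 !mul1mx !mulmx0 !add0r mulNmx mulmxN opprK addrN.
have upper : block_mx 1%:M 0 (- Wp) ('X - 1)%:M *m M = block_mx Ap (- Up) 0 ('X%:M : 'M_d).
  rewrite mulmx_block !mul1mx !mul0mx !addr0 !mulmx1 mulNmx WA mul_scalar_mx addNr.
  by rewrite mulmxN mulNmx opprK WU -raddfD /= addrC subrK.
move: (congr1 determinant lower) (congr1 determinant upper).
rewrite !det_mulmx !det_lblock !det_ublock !det1 !mulr1 mul1r !det_scalar.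
by rewrite /char_poly defl => <-; rewrite mulrC => ->.
Qed.

Lemma deflated_roots_in_disc (K : numClosedFieldType) n d (F F' : 'M[K]_n) (rs : seq K) :
  char_poly F' * ('X - 1) ^+ d = char_poly F * 'X ^+ d ->
  char_poly F = \prod_(z <- rs) ('X - z%:P) ->
  count (fun z => ~~ (`|z| < 1)) rs = d ->
  exists2 rs', char_poly F' = \prod_(z <- rs') ('X - z%:P) & all (fun z => `|z| < 1) rs'.
Proof.
move=> hdefl hF hcount.
have [rs' hrs'] := closed_field_poly_normal (char_poly F').
rewrite (monicP (char_poly_monic F')) scale1r in hrs'.
exists rs' => //.
have expXsubC (c : K) m : ('X - c%:P) ^+ m = \prod_(z <- nseq m c) ('X - z%:P).
  by rewrite big_nseq; elim: m => [|m IH]; rewrite ?expr0 // exprS IH.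
have expX : ('X : {poly K}) ^+ d = \prod_(z <- nseq d 0) ('X - z%:P).
  by rewrite -expXsubC polyC0 subr0.
move: hdefl; rewrite hrs' hF expXsubC expX -!big_cat => /prod_XsubC_eq /permP count_eq.
have := count_eq (fun z => ~~ (`|z| < 1)); rewrite !count_cat !count_nseq hcount /=.
rewrite normr1 normr0 ltxx ltr01 /= mul1n mul0n addn0 -[RHS]add0n => /addIn count0.
have : ~~ has (fun z => ~~ (`|z| < 1)) rs' by rewrite has_count count0.
by move/hasPn => none; apply/allP => z /none /negPn.
Qed.

Lemma affine_recursion_error (R : pzRingType) m n (F : 'M[R]_m) (g e : 'M[R]_(m, n))
    (s : nat -> 'M[R]_(m, n)) :
  (forall t, s t.+1 = F *m s t + g) -> F *m e + g = e ->
  forall t, s t - e = F ^+ t *m (s 0%N - e).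
Proof.
move=> hs he; elim=> [|t IH]; first by rewrite expr0 mul1mx.
by rewrite hs -[in LHS]he opprD addrACA subrr addr0 exprS -mulmxE -mulmxA -IH mulmxBr.
Qed.

Section InvariantProjection.
Variables (K : archiClosedFieldType) (n d : nat).
Variables (F : 'M[K]_n) (W : 'M[K]_(d, n)) (S : 'M[K]_(n, d)).
Hypotheses (WF : W *m F = W) (WS : W *m S = 1%:M).

Lemma mxpow_deflate t (v : 'cV[K]_n) :
  W *m v = 0 -> F ^+ t *m v = (F - F *m S *m W) ^+ t *m v.
Proof.
have WFk k : W *m F ^+ k = W.
  by elim: k => [|k IH]; rewrite ?expr0 ?mulmx1 // exprSr -mulmxE mulmxA IH WF.
move=> Wv; elim: t => [|t IH]; first by rewrite !expr0.
rewrite !exprS -!mulmxE -!(mulmxA _ _ v) -IH mulmxBl -!mulmxA (mulmxA W) WFk Wv.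
by rewrite !mulmx0 subr0.
Qed.

Lemma mx_cvg0_mxpow (rs : seq K) : eigenvalues_are F rs ->
  count (fun z => ~~ (`|z| < 1)) rs = d ->
  forall v : 'cV[K]_n, W *m v = 0 -> mx_cvg0 (fun t => F ^+ t *m v).
Proof.
move=> hrs hcount v Wv.
have [rs' hrs' hall] := deflated_roots_in_disc (char_poly_deflate WF WS) hrs hcount.
have cvg_defl : mx_cvg0 (fun t => (F - F *m S *m W) ^+ t *m v).
  apply: mx_cvg0P => k j; rewrite (ord1 j).
  by apply: cvg0_mxpow_annihilated hall _ k; rewrite Cayley_Hamilton_roots // mul0mx.
move=> eps /cvg_defl [T hT]; exists T => t /hT.
by rewrite mxpow_deflate.
Qed.

End InvariantProjection.

Section BlockIndex.
Variables N d : nat.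

Lemma blk_idx (i : 'I_N) (a : 'I_d) : blk (idx i a) = i.
Proof.
apply: val_inj => /=; have ad := ltn_ord a.
by rewrite divnMDl ?(leq_ltn_trans (leq0n a)) // divn_small // addn0.
Qed.

Lemma off_idx (i : 'I_N) (a : 'I_d) : off (idx i a) = a.
Proof. by apply: val_inj => /=; rewrite modnMDl modn_small. Qed.

Lemma idx_blk_off (k : 'I_(N * d)) : idx (blk k) (off k) = k.
Proof. by apply: val_inj => /=; rewrite -divn_eq. Qed.

Lemma sum_idx (V : nmodType) (F : 'I_(N * d) -> V) :
  \sum_k F k = \sum_(i < N) \sum_(a < d) F (idx i a).
Proof.
rewrite pair_big /= (reindex (fun k : 'I_(N * d) => (blk k, off k))) /=.
  by apply: eq_bigr => k _; rewrite idx_blk_off.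
exists (fun ia : 'I_N * 'I_d => idx ia.1 ia.2) => [k _ | [i a] _] /=.
  by rewrite idx_blk_off.
by rewrite blk_idx off_idx.
Qed.

End BlockIndex.

Lemma sum_delta_mull (R : pzSemiRingType) m (a : 'I_m) (f : 'I_m -> R) :
  \sum_(b < m) (b == a)%:R * f b = f a.
Proof.
rewrite (bigD1 a) //= eqxx mul1r big1 ?addr0 // => b /negbTE ->.
by rewrite mul0r.
Qed.

Section RealMatrices.
Variable K : numClosedFieldType.

Lemma row_stochastic_sum n (A : 'M[K]_n) : row_stochastic_good A ->
  forall i, \sum_j A i j = 1.
Proof.
case=> _ /matrixP rowA _ i; move: (rowA i ord0); rewrite !mxE => <-.
by apply: eq_bigr => j _; rewrite mxE mulr1.
Qed.

Lemma col_stochastic_sum n (A : 'M[K]_n) : col_stochastic_good A ->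
  forall j, \sum_i A i j = 1.
Proof.
case=> _ /matrixP colA _ j; move: (colA ord0 j); rewrite !mxE => <-.
by apply: eq_bigr => i _; rewrite mxE mul1r.
Qed.

Lemma real_mx_mulmx_Re m n (S : 'M[K]_(m, n)) (v : 'cV[K]_n) : real_mx S ->
  map_mx (fun x => 'Re x) (S *m v) = S *m map_mx (fun x => 'Re x) v.
Proof.
move=> hS; apply/matrixP => i j; rewrite !mxE raddf_sum.
by apply: eq_bigr => k _; rewrite !mxE; apply: ReMl.
Qed.

Lemma real_mx_mulmx_Im m n (S : 'M[K]_(m, n)) (v : 'cV[K]_n) : real_mx S ->
  map_mx (fun x => 'Im x) (S *m v) = S *m map_mx (fun x => 'Im x) v.
Proof.
move=> hS; apply/matrixP => i j; rewrite !mxE raddf_sum.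
by apply: eq_bigr => k _; rewrite !mxE; apply: ImMl.
Qed.

(* A complex kernel vector of a real matrix splits into real and imaginary
   parts, both of which lie in the kernel. *)
Lemma real_mx_unitmx n (S : 'M[K]_n) : real_mx S ->
  (forall w : 'cV[K]_n, real_mx w -> S *m w = 0 -> w = 0) -> S \in unitmx.
Proof.
move=> hS inj; rewrite unitmxE unitfE -det_tr; apply/negP => /det0P [u u0 uS].
have Sv : S *m u^T = 0 by rewrite -[S]trmxK -trmx_mul uS trmx0.
have Re0 : map_mx (fun x => 'Re x) u^T = 0.
  apply: inj => [i j|]; first by rewrite mxE Creal_Re.
  by rewrite -real_mx_mulmx_Re // Sv; apply/matrixP => i j; rewrite !mxE raddf0.
have Im0 : map_mx (fun x => 'Im x) u^T = 0.
  apply: inj => [i j|]; first by rewrite mxE Creal_Im.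
  by rewrite -real_mx_mulmx_Im // Sv; apply/matrixP => i j; rewrite !mxE raddf0.
move/eqP: u0; apply; apply/matrixP => i j.
move/matrixP: Re0 => /(_ j i); move/matrixP: Im0 => /(_ j i); rewrite !mxE => Im0 Re0.
by rewrite [u i j]Crect Re0 Im0 mulr0 addr0.
Qed.

Lemma sum_posdef_unitmx N d (Cs : 'I_N -> 'M[K]_d) :
  (0 < N)%N -> (forall i, sym_posdef (Cs i)) -> (\sum_i Cs i) \in unitmx.
Proof.
move=> N0 hC; apply: real_mx_unitmx => [i j | w wreal Sw].
  by rewrite summxE rpred_sum // => k _; case: (hC k) => /(_ i j).
apply/eqP/negPn/negP => w0.
have pos i : 0 < (w^T *m Cs i *m w) ord0 ord0 by case: (hC i) => _ _ /(_ w wreal w0).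
have : 0 < (w^T *m (\sum_i Cs i) *m w) ord0 ord0.
  rewrite mulmx_sumr mulmx_suml summxE (bigD1 (Ordinal N0)) //=.
  by rewrite ltr_wpDr ?sumr_ge0 // => i _; apply/ltW.
by rewrite -mulmxA Sw mulmx0 mxE ltxx.
Qed.

End RealMatrices.

Section GradientTracking.
Variables (K : archiClosedFieldType) (N d p : nat).
Variables (Cs : 'I_N -> 'M[K]_d) (Gs : 'I_N -> 'M[K]_(d, p)) (A At : 'M[K]_N).
Hypotheses (rowA : forall i, \sum_j A i j = 1) (colAt : forall j, \sum_i At i j = 1).
Hypothesis unitC : (\sum_i Cs i) \in unitmx.

Definition blocksum : 'M[K]_(d, N * d) := \matrix_(a, k) (off k == a)%:R.

Definition replicate (v : 'cV[K]_d) : 'cV[K]_(N * d) := \col_k v (off k) ord0.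

Lemma blocksumE m (M : 'M[K]_(N * d, m)) a j : (blocksum *m M) a j = \sum_i M (idx i a) j.
Proof.
rewrite mxE sum_idx; apply: eq_bigr => i _.
under eq_bigr do rewrite mxE off_idx.
exact: sum_delta_mull.
Qed.

Lemma blocksum_Atbig : blocksum *m Atbig d At = blocksum.
Proof.
apply/matrixP => a l; rewrite blocksumE.
under eq_bigr do rewrite mxE blk_idx off_idx [1%:M _ _]mxE.
by rewrite -mulr_suml colAt mul1r mxE eq_sym.
Qed.

Lemma Abig_replicate v : Abig d A *m replicate v = replicate v.
Proof.
apply/matrixP => k z; rewrite !mxE sum_idx.
under eq_bigr do under eq_bigr do rewrite !mxE blk_idx off_idx.
transitivity (\sum_(i < N) A (blk k) i * v (off k) ord0).
  apply: eq_bigr => i _; rewrite (bigD1 (off k)) //= eqxx mulr1 big1 ?addr0 // => b b_k.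
  by rewrite eq_sym (negbTE b_k) mulr0 mul0r.
by rewrite -mulr_suml rowA mul1r.
Qed.

Lemma blocksum_Cbig v : blocksum *m (Cbig Cs *m replicate v) = (\sum_i Cs i) *m v.
Proof.
apply/matrixP => a z; rewrite blocksumE (ord1 z).
under eq_bigr do rewrite mxE sum_idx.
rewrite mxE; transitivity (\sum_i \sum_b Cs i a b * v b ord0).
  apply: eq_bigr => i _; rewrite (bigD1 i) //= [X in _ + X]big1 ?addr0.
    by apply: eq_bigr => b _; rewrite /Cbig /blkdiag !mxE !blk_idx !off_idx eqxx.
  move=> j /negbTE ji; rewrite big1 // => c _.
  by rewrite /Cbig /blkdiag !mxE !blk_idx eq_sym ji mul0r.
by rewrite exchange_big /=; apply: eq_bigr => b _; rewrite summxE mulr_suml.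
Qed.

Lemma blocksum_Qbig (th : 'cV[K]_p) :
  blocksum *m (Qbig Cs Gs *m th) = - ((\sum_i Cs i *m Gs i) *m th).
Proof.
apply/matrixP => a z; rewrite blocksumE (ord1 z) !mxE -sumrN.
under eq_bigr do rewrite mxE.
under [RHS]eq_bigr do rewrite summxE mulr_suml -sumrN.
rewrite [RHS]exchange_big; apply: eq_bigr => i _; apply: eq_bigr => j _.
by rewrite /Qbig /blkcol !mxE blk_idx off_idx mulNr.
Qed.

Definition conserved : 'M[K]_(d, N * d + N * d) := row_mx 0 blocksum.

Definition z1_embedding : 'M[K]_(N * d + N * d, d) :=
  col_mx 0 (\matrix_(k, a) ((k : nat) == a)%:R).

Lemma conserved_Fmx Ky Kz : conserved *m Fmx Cs A At Ky Kz = conserved.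
Proof.
rewrite /conserved /Fmx mul_row_block !mul0mx !add0r blocksum_Atbig.
by rewrite mulmxA mulmxBr mulmx1 blocksum_Atbig subrr mul0mx.
Qed.

Lemma conserved_z1_embedding : (0 < N)%N -> conserved *m z1_embedding = 1%:M.
Proof.
move=> N0; rewrite /conserved /z1_embedding mul_row_col mul0mx add0r.
apply/matrixP => a b; rewrite blocksumE (bigD1 (Ordinal N0)) //= big1 ?addr0.
  by rewrite !mxE /= mul0n add0n.
move=> i i0; rewrite mxE /=; suff /negbTE -> : (i * d + a != b)%N by [].
have /(leq_trans (ltn_ord b)) : (d <= i * d + a)%N.
  rewrite (leq_trans _ (leq_addr _ _)) // leq_pmull // lt0n.
  by apply: contraNneq i0 => i_0; apply/eqP/val_inj.
by apply: contraTneq => ->; rewrite ltnn.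
Qed.

Lemma conserved_init (v : 'cV[K]_(N * d + N * d)) :
  \sum_i block_of (dsubmx v) i = 0 -> conserved *m v = 0.
Proof.
move=> /matrixP z0; rewrite /conserved -[v]vsubmxK mul_row_col mul0mx add0r.
apply/matrixP => a j; have -> : j = ord0 := ord1 j.
rewrite blocksumE; apply: etrans (z0 a ord0); rewrite summxE.
by apply: eq_bigr => i _; rewrite /block_of [RHS]mxE.
Qed.

Variable theta0 : 'cV[K]_p.

(* z is chosen so that the x-update is stationary when K_z = K_y. *)
Definition equilibrium : 'cV[K]_(N * d + N * d) :=
  let x := replicate (Sigma Cs Gs *m theta0) in
  col_mx x (- (Cbig Cs *m x + Qbig Cs Gs *m theta0)).

Lemma equilibrium_x i a :
  equilibrium (lshift (N * d) (idx i a)) ord0 = (Sigma Cs Gs *m theta0) a ord0.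
Proof. by rewrite col_mxEu mxE off_idx. Qed.

Lemma conserved_equilibrium : conserved *m equilibrium = 0.
Proof.
rewrite /conserved /equilibrium mul_row_col mul0mx add0r mulmxN mulmxDr.
rewrite blocksum_Cbig blocksum_Qbig /Sigma !mulmxA mulmxV // mul1mx.
by rewrite addrN oppr0.
Qed.

Lemma equilibrium_fixed Ky :
  Fmx Cs A At Ky Ky *m equilibrium + Gmx Cs Gs At Ky *m theta0 = equilibrium.
Proof.
rewrite /Fmx /Gmx /equilibrium mul_block_col mul_col_mx add_col_mx; congr col_mx.
  rewrite mulmxDl Abig_replicate -!addrA -!mulmxA -!mulmxDr opprD.
  by rewrite subrK addrN mulmx0 addr0.
by rewrite -!mulmxA addrAC -mulmxDr mulmxN mulmxBl mul1mx addrAC subrr add0r.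
Qed.

End GradientTracking.

Theorem proposition2 (K : archiClosedFieldType) (N d p : nat)
  (hN : (0 < N)%N) (hd : (0 < d)%N) (hp : (0 < p)%N)
  (Cs : 'I_N -> 'M[K]_d) (Gs : 'I_N -> 'M[K]_(d, p)) (A At : 'M[K]_N)
  (hC : forall i, sym_posdef (Cs i)) (hG : forall i, real_mx (Gs i))
  (hA : row_stochastic_good A) (hAt : col_stochastic_good At)
  (Ky Kz : 'M[K]_(N * d)) (hKy : real_mx Ky) (hKz : Kz = Ky)
  (hF : exists rs, eigenvalues_are (Fmx Cs A At Ky Kz) rs /\
                   count (fun z => ~~ (`|z| < 1)) rs = d)
  (theta0 : 'cV[K]_p) (htheta : real_mx theta0)
  (s : nat -> 'cV[K]_(N * d + N * d))
  (hs0 : real_mx (s 0%N))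
  (hz0 : \sum_(i < N) block_of (dsubmx (s 0%N)) i = 0)
  (hrec : forall t, s t.+1 = Fmx Cs A At Ky Kz *m s t + Gmx Cs Gs At Ky *m theta0) :
  (exists M : K, forall t k, `|s t k ord0| <= M) /\
  (forall i : 'I_N, forall eps : K, 0 < eps ->
     exists T : nat, forall t, (T <= t)%N -> forall a : 'I_d,
       `|block_of (usubmx (s t)) i a ord0 - (Sigma Cs Gs *m theta0) a ord0| < eps).
Proof.
subst Kz; have [rs [hrs hcount]] := hF.
have rowA := row_stochastic_sum hA; have colAt := col_stochastic_sum hAt.
have unitC := sum_posdef_unitmx hN hC.
set e := equilibrium Cs Gs theta0; set W := conserved K N d.
have e_fixed : Fmx Cs A At Ky Ky *m e + Gmx Cs Gs At Ky *m theta0 = e.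
  exact: equilibrium_fixed.
have WF : W *m Fmx Cs A At Ky Ky = W by exact: conserved_Fmx.
have W_init : W *m (s 0%N - e) = 0.
  by rewrite mulmxBr conserved_init // conserved_equilibrium // subr0.
have cvg : mx_cvg0 (fun t => s t - e).
  move=> eps /(mx_cvg0_mxpow WF (conserved_z1_embedding K d hN) hrs hcount W_init).
  by case=> T hT; exists T => t; rewrite (affine_recursion_error hrec e_fixed); apply: hT.
split; first by have [M hM] := mx_cvg0_bounded cvg; exists M => t k; apply: hM.
move=> i eps /cvg [T hT]; exists T => t /hT err_small a.
have -> : block_of (usubmx (s t)) i a ord0 - (Sigma Cs Gs *m theta0) a ord0
    = (s t - e) (lshift _ (idx i a)) ord0 by rewrite -(equilibrium_x _ _ _ i) /block_of !mxE.
exact: err_small.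
Qed.
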